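(* In the setting below, for all natural numbers $n,m\geq1$ with $n\neq m$, $M_n\cap M_m=\emptyset$.
   Context: Work in ZFA (ZF with a set $A$ of atoms, i.e. urelements that have no elements), extended by a primitive binary relation $\preccurlyeq$ on $A$, with Separation and Replacement holding for formulas mentioning $\preccurlyeq$. $A$ is an infinite set of atoms and $\preccurlyeq$ is a pre-ordering (reflexive, transitive) on $A$ with no minimal elements: for every $a\in A$ there is $b\in A$ with $b\preccurlyeq a$ and not $a\preccurlyeq b$. For $a\in A$, $pr(a)=\{b\in A:b\preccurlyeq a\}$; $LO(A,\preccurlyeq)$ is the set of nonempty $x\subseteq A$ with $pr(a)\subseteq x$ for all $a\in x$. For a set $X$ of sets, $LO(X,\subseteq)$ is the set of nonempty $x\subseteq X$ such that for every $y\in x$ and every $z\in X$ with $z\subseteq y$, $z\in x$. The magmatic hierarchy: $M_1=LO(A,\preccurlyeq)$ and $M_{n+1}=LO(M_n,\subseteq)$ for $n\geq1$. *)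

(* A model of ZFA-sets (well-founded sets over a type A of
   atoms) as Aczel trees with extensional equality; classes are predicates. *)
From Stdlib Require Import List.

Set Implicit Arguments.

Inductive V (A : Type) : Type :=
| atom : A -> V A
| sup : forall Ix : Type, (Ix -> V A) -> V A.

Arguments atom {A} a.
Arguments sup {A} Ix f.

Fixpoint eqV {A : Type} (x : V A) : V A -> Prop :=
  match x with
  | atom a => fun y => match y with atom b => a = b | @sup _ _ _ => False end
  | @sup _ Ix f => fun y =>
      match y with
      | atom _ => False
      | @sup _ Jx g => (forall i : Ix, exists j : Jx, eqV (f i) (g j)) /\
                   (forall j : Jx, exists i : Ix, eqV (f i) (g j))
      end
  end.

Definition memV {A : Type} (x y : V A) : Prop :=
  match y with
  | atom _ => False
  | @sup _ Ix f => exists i : Ix, eqV x (f i)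
  end.

Definition isSet {A : Type} (x : V A) : Prop :=
  match x with atom _ => False | @sup _ _ _ => True end.

Definition subV {A : Type} (z y : V A) : Prop :=
  forall w, memV w z -> memV w y.

Definition LO_atoms {A : Type} (le : A -> A -> Prop) (x : V A) : Prop :=
  isSet x /\ (exists w, memV w x) /\
  (forall w, memV w x -> exists a : A, eqV w (atom a)) /\
  (forall a b : A, memV (atom a) x -> le b a -> memV (atom b) x).

Definition LO_sub {A : Type} (X : V A -> Prop) (x : V A) : Prop :=
  isSet x /\ (exists w, memV w x) /\
  (forall w, memV w x -> X w) /\
  (forall y z, memV y x -> X z -> subV z y -> memV z x).

(* magmatic hierarchy: M 1 = LO(A,<=), M (n+1) = LO(M n, subseteq);
   M 0 is the empty class (unused) *)
Fixpoint M {A : Type} (le : A -> A -> Prop) (n : nat) : V A -> Prop :=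
  match n with
  | 0 => fun _ => False
  | S k => match k with
           | 0 => LO_atoms le
           | S _ => LO_sub (M le k)
           end
  end.

(* Every element of some M_k is nonempty; members of elements of M_1 are atoms, while
   members of elements of M_(k+1) lie in M_k, hence are sets.  So a common element of
   M_(n+1) and M_(m+1) with n, m >= 1 has a member common to M_n and M_m, and descending
   in this way ends in M_1 and some M_(j+2), whose common element would have a member
   that is both an atom and a set. *)
From Stdlib Require Import List.

Section Magmatic.

Variables (A : Type) (le : A -> A -> Prop).

Lemma M_S_isSet j (x : V A) : M le (S j) x -> isSet x.
Proof. destruct j; intros [Hset _]; exact Hset. Qed.

Lemma M_S_nonempty j (x : V A) : M le (S j) x -> exists w, memV w x.
Proof. destruct j; intros [_ [Hne _]]; exact Hne. Qed.

Lemma M_1_mem_atom (x w : V A) : M le 1 x -> memV w x -> exists a, eqV w (atom a).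
Proof. intros [_ [_ [Hatoms _]]]; exact (Hatoms w). Qed.

Lemma M_SS_mem (j : nat) (x w : V A) : M le (S (S j)) x -> memV w x -> M le (S j) w.
Proof. intros [_ [_ [Hmem _]]]; exact (Hmem w). Qed.

Lemma eqV_atom_not_isSet (w : V A) (a : A) : eqV w (atom a) -> ~ isSet w.
Proof. destruct w; simpl; tauto. Qed.

Lemma M_1_M_SS_disjoint j (x : V A) : ~ (M le 1 x /\ M le (S (S j)) x).
Proof.
  intros [H1 HSS].
  destruct (M_S_nonempty _ _ H1) as [w Hw].
  destruct (M_1_mem_atom _ _ H1 Hw) as [a Ha].
  exact (eqV_atom_not_isSet w a Ha (M_S_isSet j w (M_SS_mem j x w HSS Hw))).
Qed.

Lemma M_S_disjoint n : forall m, n <> m -> forall x : V A, ~ (M le (S n) x /\ M le (S m) x).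
Proof.
  induction n as [|n IH]; intros [|m] Hnm x [Hn Hm]; try congruence.
  - exact (M_1_M_SS_disjoint m x (conj Hn Hm)).
  - exact (M_1_M_SS_disjoint n x (conj Hm Hn)).
  - destruct (M_S_nonempty _ _ Hn) as [w Hw].
    apply (IH m (fun E => Hnm (f_equal S E)) w).
    split; [exact (M_SS_mem n x w Hn Hw) | exact (M_SS_mem m x w Hm Hw)].
Qed.

End Magmatic.

Theorem lemma4p8 (A : Type) (le : A -> A -> Prop)
  (A_infinite : ~ exists l : list A, forall a : A, In a l)
  (le_refl : forall a, le a a)
  (le_trans : forall a b c, le a b -> le b c -> le a c)
  (no_min : forall a, exists b, le b a /\ ~ le a b)
  (n m : nat) (hn : 1 <= n) (hm : 1 <= m) (hnm : n <> m) :
  forall x : V A, ~ (M le n x /\ M le m x).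
Proof.
  destruct n as [|n]; [inversion hn|].
  destruct m as [|m]; [inversion hm|].
  apply M_S_disjoint; congruence.
Qed.
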